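(* Let $n\geq 5$ and $1\leq i\leq\lfloor n/2\rfloor$. Let $G_i$ be the graph obtained from the complete graph $K_n$ by deleting $i$ edges, each of which joins two saturated vertices (equivalently, deleting the edges of a matching of size $i$). If $g:V((G_i)_1)\to V((G_i)_2)$ is a constant function, then $$Dist(F_{G_i})=\max\{n-2i,\ \phi(i)\}.$$
   Context: A vertex of a graph is saturated if it is adjacent to all other vertices. $Dist(H)$ is the least $t$ such that $H$ has a labeling $V(H)\to\{1,\dots,t\}$ preserved by no non-identity automorphism of $H$. Functigraph: for disjoint copies $H_1,H_2$ of a graph $H$ and a function $g:V(H_1)\to V(H_2)$, $F_H$ has vertex set $V(H_1)\cup V(H_2)$ and edge set $E(H_1)\cup E(H_2)\cup\{uv: u\in V(H_1),\ g(u)=v\}$. The function $\phi:\mathbb{N}\to\mathbb{N}\setminus\{1\}$ is defined by $\phi(i)=k$, where $k$ is the least number (with $k\ge 2$) such that $i\leq\binom{k}{2}$; e.g. $\phi(32)=9$. *)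

From mathcomp Require Import all_boot all_fingroup.
Set Implicit Arguments. Unset Strict Implicit. Unset Printing Implicit Defensive.

(* Graphs: a simple graph on a finite vertex type T is a symmetric,
   irreflexive boolean relation adj : rel T. *)

Definition is_aut (T : finType) (adj : rel T) (s : {perm T}) : bool :=
  [forall x, forall y, adj (s x) (s y) == adj x y].

Definition distinguishing (T : finType) (adj : rel T) (L : Type) (f : T -> L) : Prop :=
  forall s : {perm T}, is_aut adj s -> (forall x, f (s x) = f x) -> s = 1%g.

(* adj has a distinguishing labeling with labels in {1..t} (represented by 'I_t). *)
Definition t_distinguishable (T : finType) (adj : rel T) (t : nat) : bool :=
  [exists f : {ffun T -> 'I_t},
     [forall s : {perm T}, (is_aut adj s && [forall x, f (s x) == f x]) ==> (s == 1%g)]].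

Lemma t_distinguishable_card (T : finType) (adj : rel T) :
  exists t, t_distinguishable adj t.
Proof.
exists #|T|; apply/existsP; exists [ffun x => enum_rank x].
apply/forallP => s; apply/implyP => /andP [_ /forallP H].
apply/eqP/permP => x; rewrite perm1.
by have := H x; rewrite !ffunE => /eqP /enum_rank_inj.
Qed.

Definition Dist (T : finType) (adj : rel T) : nat :=
  ex_minn (t_distinguishable_card adj).

Lemma phi_ex (i : nat) : exists k, (2 <= k) && (i <= 'C(k, 2)).
Proof.
exists i.+2; rewrite /= binS bin1; apply: leq_trans (leqnSn i) _; exact: leq_addl.
Qed.

Definition phi (i : nat) : nat := ex_minn (phi_ex i).

Definition is_matching (n : nat) (M : {set {set 'I_n}}) : Prop :=
  (forall e, e \in M -> #|e| = 2) /\ trivIset M.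

Definition Kn_minus (n : nat) (M : {set {set 'I_n}}) : rel 'I_n :=
  fun a b => (a != b) && ([set a; b] \notin M).

(* Functigraph F_H of H (on vertex type V) w.r.t. g : V(H_1) -> V(H_2);
   H_1 is the left copy (inl), H_2 the right copy (inr). *)
Definition functigraph (V : finType) (adj : rel V) (g : V -> V) : rel (V + V) :=
  fun x y =>
    match x, y with
    | inl a, inl b => adj a b
    | inr a, inr b => adj a b
    | inl a, inr b => g a == b
    | inr b, inl a => g a == b
    end.

From mathcomp Require Import all_boot all_fingroup.
Set Implicit Arguments. Unset Strict Implicit. Unset Printing Implicit Defensive.

(* Let v be the constant value of g.  The copy of v in the second graph is adjacent to
   the whole first copy, so it is the only vertex of degree above n and every automorphism
   fixes it; as K_n minus a matching is connected, automorphisms then preserve each copy and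
   act on it as automorphisms of K_n - M, i.e. as permutations mapping matching edges onto
   matching edges.
   With max(n - 2i, phi(i)) labels, give the n - 2i unmatched vertices distinct labels and
   each matching edge its own pair of labels, on both copies alike: only the identity
   preserves this labeling.  With fewer labels, two unmatched vertices share a label, or a
   matching edge is monochromatic, or two matching edges carry the same pair of labels;
   swapping them is a label-preserving automorphism of the first copy, which extends by the
   identity on the second. *)


Lemma is_autP (T : finType) (adj : rel T) (s : {perm T}) :
  reflect (forall x y, adj (s x) (s y) = adj x y) (is_aut adj s).
Proof.
apply: (iffP forallP) => [H x y | H x]; first by apply/eqP; have /forallP := H x.
by apply/forallP => y; rewrite H.
Qed.

Lemma is_aut1 (T : finType) (adj : rel T) : is_aut adj 1.
Proof. by apply/is_autP => x y; rewrite !perm1. Qed.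

Lemma is_aut_inv (T : finType) (adj : rel T) (s : {perm T}) :
  is_aut adj s -> is_aut adj s^-1.
Proof. by move/is_autP=> H; apply/is_autP => x y; rewrite -H !permKV. Qed.

Lemma t_distinguishableP (T : finType) (adj : rel T) (t : nat) :
  reflect (exists f : T -> 'I_t, distinguishing adj f) (t_distinguishable adj t).
Proof.
apply: (iffP existsP) => [[f /forallP H] | [f H]].
  exists f => s aut fs; apply/eqP; have /implyP := H s; apply.
  by rewrite aut; apply/forallP => x; rewrite fs.
exists [ffun x => f x]; apply/forallP => s; apply/implyP => /andP [aut /forallP fs].
by apply/eqP/H => // x; have /eqP := fs x; rewrite !ffunE.
Qed.

Lemma Dist_eq (T : finType) (adj : rel T) (t : nat) :
  t_distinguishable adj t -> (forall u, u < t -> ~~ t_distinguishable adj u) ->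
  Dist adj = t.
Proof.
move=> dt below; rewrite /Dist; case: ex_minnP => m dm min_m.
apply/eqP; rewrite eqn_leq min_m // leqNgt; apply/negP => /below.
by rewrite dm.
Qed.

Definition symmetric_labeling (T : finType) (adj : rel T) (L : Type) (f : T -> L) :=
  exists s : {perm T}, [/\ s != 1%g, is_aut adj s & forall x, f (s x) = f x].

Lemma symmetric_labeling_not_distinguishing (T : finType) (adj : rel T) L (f : T -> L) :
  symmetric_labeling adj f -> ~ distinguishing adj f.
Proof. by case=> s [/eqP ns aut fs] /(_ s aut fs). Qed.

Lemma exists_notin (T : finType) (A : {set T}) : #|A| < #|T| -> exists x, x \notin A.
Proof.
rewrite -(cardsC A) -{1}[#|A|]addn0 ltn_add2l card_gt0 => /set0Pn [x].
by rewrite inE; exists x.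
Qed.

Lemma pigeonhole (T U : finType) (A : {set T}) (B : {set U}) (h : T -> U) :
  {in A, forall x, h x \in B} -> #|B| < #|A| ->
  exists x y, [/\ x \in A, y \in A, x != y & h x = h y].
Proof.
move=> hAB ltBA; have /dinjectivePn [x xA [y /andP [yx yA] hxy]] : ~~ dinjectiveb h A.
  apply: contraTN ltBA => /dinjectiveP inj; rewrite -leqNgt -(card_in_imset inj).
  by apply: subset_leq_card; apply/subsetP => _ /imsetP [x xA ->]; apply: hAB.
by exists x, y; rewrite eq_sym.
Qed.

Lemma imset_fixed (T : finType) (s : T -> T) (A : {set T}) :
  {in A, forall x, s x = x} -> s @: A = A.
Proof. by move=> H; rewrite -[RHS]imset_id; apply: eq_in_imset. Qed.

Lemma imset2 (T U : finType) (f : T -> U) a b : f @: [set a; b] = [set f a; f b].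
Proof. by rewrite imsetU1 imset_set1. Qed.

Lemma perm_neq1 (T : finType) (s : {perm T}) x : s x != x -> s != 1%g.
Proof. by apply: contraNneq => ->; rewrite perm1. Qed.

Lemma tperm_label (T : finType) L (f : T -> L) a b :
  f a = f b -> forall x, f (tperm a b x) = f x.
Proof. by move=> fab x; case: tpermP => [->|->|//]; rewrite fab. Qed.

Lemma set2_inj (T : finType) (x y z w : T) :
  [set x; y] = [set z; w] -> x != y -> x = z /\ y = w \/ x = w /\ y = z.
Proof.
move=> E xy; have : x \in [set z; w] by rewrite -E !inE eqxx.
have : y \in [set z; w] by rewrite -E !inE eqxx orbT.
rewrite !inE => /orP [] /eqP yE /orP [] /eqP xE; subst x y; rewrite ?eqxx // in xy.
  by right.
by left.
Qed.

Definition set_embed (T U : finType) (d : U) (A : {set T}) (B : {set U}) (x : T) : U :=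
  nth d (enum B) (index x (enum A)).

Section SetEmbed.

Variables (T U : finType) (d : U) (A : {set T}) (B : {set U}).
Hypothesis le_AB : #|A| <= #|B|.

Lemma set_embed_index_lt x : x \in A -> index x (enum A) < size (enum B).
Proof. by move=> xA; rewrite -cardE (leq_trans _ le_AB) // cardE index_mem mem_enum. Qed.

Lemma set_embed_mem x : x \in A -> set_embed d A B x \in B.
Proof. by move=> xA; rewrite -mem_enum mem_nth // set_embed_index_lt. Qed.

Lemma set_embed_inj : {in A &, injective (set_embed d A B)}.
Proof.
move=> x y xA yA /eqP; rewrite nth_uniq ?enum_uniq ?set_embed_index_lt // => /eqP.
by apply: (index_inj x); rewrite mem_enum.
Qed.

Lemma set_embed_onto : #|A| = #|B| -> set_embed d A B @: A = B.
Proof.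
move=> eq_AB; apply/eqP; rewrite eqEcard (card_in_imset set_embed_inj) eq_AB leqnn andbT.
by apply/subsetP => _ /imsetP [x xA ->]; apply: set_embed_mem.
Qed.

End SetEmbed.

Section Matching.

Variables (n : nat) (M : {set {set 'I_n}}).
Hypothesis matchingM : is_matching M.

Lemma matching_neq a b : [set a; b] \in M -> a != b.
Proof. by case: matchingM => card2 _ /card2; rewrite cards2; case: (a != b). Qed.

Lemma matching_disjoint e e' x :
  e \in M -> e' \in M -> e != e' -> x \in e -> x \notin e'.
Proof.
move=> eM e'M ne xe; have /trivIsetP disj := matchingM.2.
by rewrite (disjointFr (disj _ _ eM e'M ne) xe).
Qed.

Lemma matching_partner_uniq a b c : [set a; b] \in M -> [set a; c] \in M -> b = c.
Proof.
move=> abM acM; have ab := matching_neq abM.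
have [eq_abc | ne] := eqVneq [set a; b] [set a; c].
  have : b \in [set a; c] by rewrite -eq_abc !inE eqxx orbT.
  by rewrite !inE eq_sym (negbTE ab) => /eqP.
have := matching_disjoint (x := a) abM acM ne.
by rewrite !inE eqxx => /(_ isT).
Qed.

Lemma card_cover_matching : #|cover M| = 2 * #|M|.
Proof.
case: matchingM => card2 /eqP <-.
by rewrite (eq_bigr (fun=> 2)) ?sum_nat_const 1?mulnC // => e /card2.
Qed.

Lemma card_unmatched : #|~: cover M| = n - 2 * #|M|.
Proof.
have E := cardsC (cover M); rewrite card_ord card_cover_matching in E.
by rewrite -[X in X - _]E addKn.
Qed.

Lemma Kn_minus_common_neighbour a b : 2 < n -> a != b -> ~~ Kn_minus M a b ->
  exists c, Kn_minus M a c && Kn_minus M c b.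
Proof.
move=> n3 ab; rewrite /Kn_minus ab /= negbK => abM.
have [c] : exists c, c \notin [set a; b].
  by apply: exists_notin; rewrite card_ord (leq_ltn_trans (leq_card_setU _ _)) ?cards1.
rewrite !inE negb_or => /andP [ca cb]; exists c; rewrite eq_sym ca cb /=.
apply/andP; split.
  by apply: contra cb => cM; rewrite (matching_partner_uniq abM cM).
apply: contra ca => cM; rewrite setUC in cM; rewrite setUC in abM.
by rewrite (matching_partner_uniq cM abM).
Qed.

Lemma Kn_minus_connected (P : pred 'I_n) a b : 2 < n ->
  (forall x y, Kn_minus M x y -> P x -> P y) -> P a -> P b.
Proof.
move=> n3 closedP Pa; have [<- // | ab] := eqVneq a b.
have [adj_ab | nadj_ab] := boolP (Kn_minus M a b); first exact: closedP Pa.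
have [c /andP [ac cb]] := Kn_minus_common_neighbour n3 ab nadj_ab.
exact: closedP cb (closedP _ _ ac Pa).
Qed.

Lemma Kn_minus_neighbour a : 2 < n -> exists b, Kn_minus M a b.
Proof.
move=> n3; have [b] : exists b, b \notin [set a].
  by apply: exists_notin; rewrite cards1 card_ord ltnW.
rewrite inE eq_sym => ab.
have [adj_ab | nadj_ab] := boolP (Kn_minus M a b); first by exists b.
have [c /andP [ac _]] := Kn_minus_common_neighbour n3 ab nadj_ab.
by exists c.
Qed.

Lemma Kn_minus_aut_of_blocks (s : {perm 'I_n}) :
  {in M, forall e : {set 'I_n}, s @: e \in M} -> is_aut (Kn_minus M) s.
Proof.
move=> sM; have inj : injective (fun A : {set 'I_n} => s @: A).
  exact/imset_inj/perm_inj.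
have onto : [set s @: e | e : {set 'I_n} in M] = M.
  apply/eqP; rewrite eqEcard card_imset // leqnn andbT.
  by apply/subsetP => _ /imsetP [e eM ->]; apply: sM.
have memM (A : {set 'I_n}) : (s @: A \in M) = (A \in M).
  by rewrite -{1}onto; apply: mem_imset.
by apply/is_autP => a b; rewrite /Kn_minus (inj_eq perm_inj) -imset2 memM.
Qed.

Lemma aut_Kn_minus_block (s : {perm 'I_n}) e :
  is_aut (Kn_minus M) s -> e \in M -> s @: e \in M.
Proof.
move=> /is_autP aut eM; have /eqP/cards2P [a [b [ab def_e]]] := matchingM.1 e eM.
have := aut a b; rewrite /Kn_minus (inj_eq perm_inj) ab -def_e eM /=.
by rewrite def_e imset2 => /negbFE.
Qed.

Lemma aut_Kn_minusP (s : {perm 'I_n}) :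
  reflect {in M, forall e : {set 'I_n}, s @: e \in M} (is_aut (Kn_minus M) s).
Proof.
apply: (iffP idP) => [aut e | ]; first exact: aut_Kn_minus_block.
exact: Kn_minus_aut_of_blocks.
Qed.

Lemma aut_Kn_minus_cover (s : {perm 'I_n}) x :
  is_aut (Kn_minus M) s -> (s x \in cover M) = (x \in cover M).
Proof.
suff cover_aut (r : {perm 'I_n}) y :
    is_aut (Kn_minus M) r -> y \in cover M -> r y \in cover M.
  move=> aut; apply/idP/idP; last exact: cover_aut.
  by move/(cover_aut _ _ (is_aut_inv aut)); rewrite permK.
move=> aut /bigcupP [e eM ye]; apply/bigcupP; exists (r @: e).
  exact: aut_Kn_minus_block.
exact: imset_f.
Qed.

Lemma Kn_minus_aut_swap (s : {perm 'I_n}) e1 e2 :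
  e1 \in M -> e2 \in M -> s @: e1 = e2 -> s @: e2 = e1 ->
  (forall x, x \notin e1 -> x \notin e2 -> s x = x) -> is_aut (Kn_minus M) s.
Proof.
move=> e1M e2M se1 se2 fixed; apply/aut_Kn_minusP => e eM.
have [-> | ne1] := eqVneq e e1; first by rewrite se1.
have [-> | ne2] := eqVneq e e2; first by rewrite se2.
rewrite imset_fixed // => x xe.
by apply: fixed; apply: matching_disjoint xe.
Qed.

Lemma unmatched_collision_symmetry t (f : 'I_n -> 'I_t) :
  t < #|~: cover M| -> symmetric_labeling (Kn_minus M) f.
Proof.
move=> lt_t; have [a [b [aU bU ab fab]]] : exists a b,
    [/\ a \in ~: cover M, b \in ~: cover M, a != b & f a = f b].
  by apply: (pigeonhole (B := [set: 'I_t])); rewrite ?cardsT ?card_ord.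
exists (tperm a b); split; last exact: tperm_label.
  by apply: (@perm_neq1 _ _ a); rewrite tpermL eq_sym.
apply/aut_Kn_minusP => e eM; rewrite imset_fixed // => x xe.
have xc : x \in cover M by apply/bigcupP; exists e.
by apply: tpermD; apply: contraTneq xc => <-; rewrite -in_setC.
Qed.

Lemma monochromatic_edge_symmetry L (f : 'I_n -> L) a b :
  [set a; b] \in M -> f a = f b -> symmetric_labeling (Kn_minus M) f.
Proof.
move=> abM fab; have ab := matching_neq abM.
have swap_ab : tperm a b @: [set a; b] = [set a; b] by rewrite imset2 tpermL tpermR setUC.
exists (tperm a b); split; last exact: tperm_label.
  by apply: (@perm_neq1 _ _ a); rewrite tpermL eq_sym.
apply: (Kn_minus_aut_swap abM abM) => // x; rewrite !inE negb_or => /andP [xa xb] _.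
by apply: tpermD; rewrite eq_sym.
Qed.

Lemma equicoloured_edges_symmetry L (f : 'I_n -> L) a b c d :
  [set a; b] \in M -> [set c; d] \in M -> [set a; b] != [set c; d] ->
  f a = f c -> f b = f d -> symmetric_labeling (Kn_minus M) f.
Proof.
move=> abM cdM ne fac fbd; have ab := matching_neq abM; have cd := matching_neq cdM.
have : a \notin [set c; d] by apply: matching_disjoint abM cdM ne _; rewrite ?inE ?eqxx.
have : b \notin [set c; d] by apply: matching_disjoint abM cdM ne _; rewrite ?inE ?eqxx ?orbT.
rewrite !inE !negb_or => /andP [bc bd] /andP [ac ad].
pose s := (tperm a c * tperm b d)%g.
have sa : s a = c by rewrite permM tpermL tpermD // eq_sym.
have sb : s b = d by rewrite permM (tpermD ab) ?tpermL // eq_sym.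
have sc : s c = a by rewrite permM tpermR tpermD // eq_sym.
have sd : s d = b by rewrite permM (tpermD ad) ?tpermR // eq_sym.
exists s; split.
- by apply: (@perm_neq1 _ _ a); rewrite sa eq_sym.
- apply: (Kn_minus_aut_swap abM cdM); rewrite ?imset2 ?sa ?sb ?sc ?sd // => x.
  rewrite !inE !negb_or => /andP [xa xb] /andP [xc xd].
  by rewrite permM !tpermD // eq_sym.
- by move=> x; rewrite permM tperm_label // tperm_label.
Qed.

Lemma matched_collision_symmetry t (f : 'I_n -> 'I_t) :
  'C(t, 2) < #|M| -> symmetric_labeling (Kn_minus M) f.
Proof.
move=> lt_t.
have [[e eM] | all2] := altP (@existsP _ (fun e => (e \in M) && (#|f @: e| != 2))).
  case/andP: eM => eM ne2; have /eqP/cards2P [a [b [_ def_e]]] := matchingM.1 e eM.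
  apply: (monochromatic_edge_symmetry (a := a) (b := b)); first by rewrite -def_e.
  by apply/eqP; apply: contraNT ne2; rewrite def_e imset2 cards2 => ->.
have card2 e : e \in M -> #|f @: e| = 2.
  by move=> eM; apply/eqP; apply: contraNT all2 => ne2; apply/existsP; exists e; rewrite eM.
have [e1 [e2 [e1M e2M ne fe]]] : exists e1 e2,
    [/\ e1 \in M, e2 \in M, e1 != e2 & f @: e1 = f @: e2].
  apply: (pigeonhole (B := [set P : {set 'I_t} | #|P| == 2])).
    by move=> e eM; rewrite inE card2.
  by rewrite card_draws card_ord.
have /eqP/cards2P [a [b [_ def_e1]]] := matchingM.1 e1 e1M.
have /eqP/cards2P [c [d [_ def_e2]]] := matchingM.1 e2 e2M.
subst e1 e2; have fab : f a != f b.
  by have := card2 _ e1M; rewrite imset2 cards2; case: (f a != f b).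
move: fe; rewrite !imset2 => /set2_inj /(_ fab) [[fac fbd] | [fad fbc]].
  exact: equicoloured_edges_symmetry e1M e2M ne fac fbd.
rewrite setUC in e2M ne; exact: equicoloured_edges_symmetry e1M e2M ne fad fbc.
Qed.

Section Labeling.

Variables (t : nat) (d : 'I_t).
Hypotheses (unmatched_le : #|~: cover M| <= t) (edges_le : #|M| <= 'C(t, 2)).

Definition edge_code (e : {set 'I_n}) : {set 'I_t} :=
  set_embed set0 M [set P : {set 'I_t} | #|P| == 2] e.

Definition matching_label (x : 'I_n) : 'I_t :=
  if x \in cover M then set_embed d (pblock M x) (edge_code (pblock M x)) x
  else set_embed d (~: cover M) setT x.

Let le_M_two_sets : #|M| <= #|[set P : {set 'I_t} | #|P| == 2]|.
Proof. by rewrite card_draws card_ord. Qed.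

Lemma edge_code_inj : {in M &, injective edge_code}.
Proof. exact: set_embed_inj. Qed.

Lemma card_edge_code e : e \in M -> #|edge_code e| = 2.
Proof. by move=> eM; have := set_embed_mem set0 le_M_two_sets eM; rewrite inE => /eqP. Qed.

Lemma matching_label_imset e : e \in M -> matching_label @: e = edge_code e.
Proof.
move=> eM; have card_e : #|e| = #|edge_code e| by rewrite card_edge_code ?matchingM.1.
rewrite -(set_embed_onto d (eq_leq card_e) card_e).
apply: eq_in_imset => x xe; have xc : x \in cover M by apply/bigcupP; exists e.
by rewrite /matching_label xc (def_pblock matchingM.2 eM xe).
Qed.

Lemma matching_label_inj_edge e : e \in M -> {in e &, injective matching_label}.
Proof.
by move=> eM; apply/imset_injP; rewrite matching_label_imset // card_edge_code ?matchingM.1.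
Qed.

Lemma matching_label_inj_unmatched : {in ~: cover M &, injective matching_label}.
Proof.
move=> x y xU yU; have := xU; have := yU.
rewrite /matching_label !inE => /negbTE -> /negbTE ->.
by apply: set_embed_inj; rewrite ?cardsT ?card_ord.
Qed.

Lemma matching_label_distinguishing : distinguishing (Kn_minus M) matching_label.
Proof.
move=> s aut fs; apply/permP => x; rewrite perm1.
have [xc | xU] := boolP (x \in cover M); last first.
  by apply: matching_label_inj_unmatched; rewrite ?inE ?aut_Kn_minus_cover.
have eM := pblock_mem xc; set e := pblock M x in eM *.
have xe : x \in e by rewrite mem_pblock.
have seM := aut_Kn_minus_block aut eM.
have se : s @: e = e.
  apply: edge_code_inj => //; rewrite -!matching_label_imset // -imset_comp.
  by apply: eq_imset => y; rewrite /= fs.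
by apply: (matching_label_inj_edge eM) => //; rewrite -se imset_f.
Qed.

End Labeling.

End Matching.

Section SumPerm.

Variables A B : finType.

Definition sum_perm_fun (s1 : {perm A}) (s2 : {perm B}) (x : A + B) : A + B :=
  match x with inl a => inl (s1 a) | inr b => inr (s2 b) end.

Lemma sum_perm_fun_inj s1 s2 : injective (sum_perm_fun s1 s2).
Proof. by case=> [a|a] [b|b] //= [] /perm_inj ->. Qed.

Definition sum_perm s1 s2 : {perm A + B} := perm (@sum_perm_fun_inj s1 s2).

Lemma sum_perm_inl s1 s2 a : sum_perm s1 s2 (inl a) = inl (s1 a).
Proof. by rewrite permE. Qed.

Lemma sum_perm_inr s1 s2 b : sum_perm s1 s2 (inr b) = inr (s2 b).
Proof. by rewrite permE. Qed.

Lemma sum_perm_eq1 s1 s2 : (sum_perm s1 s2 == 1%g) = (s1 == 1%g) && (s2 == 1%g).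
Proof.
apply/eqP/andP => [E | [/eqP -> /eqP ->]].
  split; apply/eqP/permP => x; rewrite perm1.
    by have := sum_perm_inl s1 s2 x; rewrite E perm1 => -[].
  by have := sum_perm_inr s1 s2 x; rewrite E perm1 => -[].
by apply/permP => -[a|b]; rewrite ?sum_perm_inl ?sum_perm_inr !perm1.
Qed.

Lemma sum_perm_split (s : {perm A + B}) :
  (forall a, exists c, s (inl a) = inl c) -> (forall b, exists c, s (inr b) = inr c) ->
  exists s1 s2, s = sum_perm s1 s2.
Proof.
move=> sl sr.
pose f1 a := if s (inl a) is inl c then c else a.
pose f2 b := if s (inr b) is inr c then c else b.
have e1 a : s (inl a) = inl (f1 a) by rewrite /f1; have [c ->] := sl a.
have e2 b : s (inr b) = inr (f2 b) by rewrite /f2; have [c ->] := sr b.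
have inj1 : injective f1.
  by move=> a a' E; apply: (@inl_inj _ B); apply: (@perm_inj _ s); rewrite !e1 E.
have inj2 : injective f2.
  by move=> b b' E; apply: (@inr_inj A); apply: (@perm_inj _ s); rewrite !e2 E.
exists (perm inj1), (perm inj2); apply/permP => -[a|b].
  by rewrite sum_perm_inl permE e1.
by rewrite sum_perm_inr permE e2.
Qed.

End SumPerm.

Definition degree (T : finType) (adj : rel T) (x : T) : nat := #|[set y | adj x y]|.

Lemma aut_degree (T : finType) (adj : rel T) (s : {perm T}) x :
  is_aut adj s -> degree adj (s x) = degree adj x.
Proof.
move=> /is_autP aut; rewrite /degree.
suff -> : [set y | adj (s x) y] = s @: [set y | adj x y] by exact/card_imset/perm_inj.
by apply/setP => y; rewrite -[y](permKV s) mem_imset ?inE ?aut //; apply: perm_inj.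
Qed.

Lemma degree_lt_card (T : finType) (adj : rel T) x : ~~ adj x x -> degree adj x < #|T|.
Proof.
by move=> nxx; apply/proper_card/properP; split; [apply/subsetP | exists x; rewrite ?inE].
Qed.

Lemma card_set_sum (A B : finType) (P : pred (A + B)) :
  #|[set x | P x]| = #|[set a | P (inl a)]| + #|[set b | P (inr b)]|.
Proof.
rewrite -!sum1_card big_sumType.
by congr (_ + _); apply: eq_bigl => x; rewrite !inE.
Qed.

Section Functigraph.

Variables (T : finType) (adj : rel T) (g : T -> T).
Notation F := (functigraph adj g).

Lemma degree_functigraph_inl a : degree F (inl a) = degree adj a + 1.
Proof.
rewrite /degree card_set_sum /=; congr (_ + _).
by rewrite -(cards1 (g a)); apply: eq_card => b; rewrite !inE eq_sym.
Qed.

Lemma degree_functigraph_inr b :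
  degree F (inr b) = degree adj b + #|[set a | g a == b]|.
Proof. by rewrite /degree card_set_sum addnC. Qed.

Lemma functigraph_sum_aut s1 s2 :
  is_aut adj s1 -> is_aut adj s2 -> (forall a, g (s1 a) = s2 (g a)) ->
  is_aut F (sum_perm s1 s2).
Proof.
move=> /is_autP aut1 /is_autP aut2 gs; apply/is_autP.
case=> [a|a] [b|b]; rewrite ?sum_perm_inl ?sum_perm_inr //=.
all: by rewrite ?aut1 ?aut2 ?gs ?(inj_eq perm_inj).
Qed.

Lemma functigraph_aut_sum s1 s2 :
  is_aut F (sum_perm s1 s2) -> is_aut adj s1 /\ is_aut adj s2.
Proof.
move=> /is_autP aut; split; apply/is_autP => a b.
  by have := aut (inl a) (inl b); rewrite !sum_perm_inl.
by have := aut (inr a) (inr b); rewrite !sum_perm_inr.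
Qed.

Definition copy_label (L : Type) (f : T -> L) (x : T + T) : L :=
  match x with inl a | inr a => f a end.

Lemma functigraph_symmetric_labeling L (f : T + T -> L) :
  (forall a b, g a = g b) -> symmetric_labeling adj (fun a => f (inl a)) ->
  symmetric_labeling F f.
Proof.
move=> gc [s [ns aut fs]]; exists (sum_perm s 1); split.
- by rewrite sum_perm_eq1 negb_and ns.
- by apply: functigraph_sum_aut (is_aut1 _) _ => // a; rewrite perm1 (gc _ a).
- by case=> [a|b]; rewrite ?sum_perm_inl ?sum_perm_inr ?perm1.
Qed.

End Functigraph.

Lemma functigraph_copy_label_distinguishing (T : finType) (adj : rel T) (g : T -> T)
    L (f : T -> L) :
  (forall s, is_aut (functigraph adj g) s -> exists s1 s2, s = sum_perm s1 s2) ->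
  distinguishing adj f -> distinguishing (functigraph adj g) (copy_label f).
Proof.
move=> split_aut fdist s aut fs; have [s1 [s2 def_s]] := split_aut s aut.
move: aut fs; rewrite def_s => /functigraph_aut_sum [aut1 aut2] fs.
apply/eqP; rewrite sum_perm_eq1; apply/andP; split; apply/eqP.
  by apply: fdist aut1 _ => a; have := fs (inl a); rewrite sum_perm_inl.
by apply: fdist aut2 _ => b; have := fs (inr b); rewrite sum_perm_inr.
Qed.

Section ConstantFunctigraph.

Variables (n : nat) (M : {set {set 'I_n}}) (g : 'I_n -> 'I_n) (v : 'I_n).
Hypotheses (n_gt2 : 2 < n) (matchingM : is_matching M) (gv : forall a, g a = v).
Notation F := (functigraph (Kn_minus M) g).

Lemma degree_Kn_minus_lt a : degree (Kn_minus M) a < n.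
Proof. by rewrite -[n in _ < n]card_ord degree_lt_card // /Kn_minus eqxx. Qed.

Lemma degree_functigraph_hub : n < degree F (inr v).
Proof.
rewrite degree_functigraph_inr addnC -[n in n < _]card_ord -cardsT.
have -> : [set a | g a == v] = setT by apply/setP => a; rewrite !inE gv eqxx.
rewrite -[X in X < _]addn0 ltn_add2l card_gt0; apply/set0Pn.
by have [b vb] := Kn_minus_neighbour matchingM v n_gt2; exists b; rewrite inE.
Qed.

Lemma degree_functigraph_not_hub x : x != inr v -> degree F x <= n.
Proof.
case: x => [a | b] ne; first by rewrite degree_functigraph_inl addn1 degree_Kn_minus_lt.
rewrite degree_functigraph_inr.
have -> : [set a | g a == b] = set0.
  by apply/setP => a; rewrite !inE gv; apply: contraNF ne => /eqP ->.
by rewrite cards0 addn0 ltnW ?degree_Kn_minus_lt.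
Qed.

Lemma aut_functigraph_fix_hub s : is_aut F s -> s (inr v) = inr v.
Proof.
move=> aut; apply/eqP; apply: contraT => /degree_functigraph_not_hub.
by rewrite aut_degree // leqNgt degree_functigraph_hub.
Qed.

Lemma aut_functigraph_inl s a : is_aut F s -> exists c, s (inl a) = inl c.
Proof.
move=> aut; case E: (s (inl a)) => [c | b]; first by exists c.
pose goes_right a := if s (inl a) is inr _ then true else false.
(* Along edges of the first copy images stay in the second copy, whose only vertex with
   neighbours in the first copy is the fixed image of v. *)
have all_right a' : goes_right a'.
  apply: (@Kn_minus_connected _ _ matchingM goes_right a a' n_gt2);
    last by rewrite /goes_right E.
  move=> x y adj_xy; rewrite /goes_right; case Ex: (s (inl x)) => [//| bx] _.
  case Ey: (s (inl y)) => [cy | //]; have /is_autP := aut; move/(_ (inl x) (inl y)).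
  rewrite Ex Ey /= adj_xy gv => /eqP vbx; have := aut_functigraph_fix_hub aut.
  by rewrite vbx -{2}Ex => /perm_inj.
have : s @: (inr v |: [set inl x | x in setT]) \subset [set inr y | y in setT].
  apply/subsetP => _ /imsetP [x /setU1P [-> | /imsetP [y _ ->]] ->].
    by rewrite aut_functigraph_fix_hub // imset_f.
  by have := all_right y; rewrite /goes_right; case: (s (inl y)) => // z _; rewrite imset_f.
move/subset_leq_card; rewrite card_imset; last exact: perm_inj.
rewrite cardsU1 !card_imset; try by move=> ? ? [].
by rewrite (_ : inr v \notin _) ?cardsT ?ltnn //; apply/imsetP => -[].
Qed.

Lemma aut_functigraph_inr s b : is_aut F s -> exists c, s (inr b) = inr c.
Proof.
move=> aut; case E: (s (inr b)) => [a | c]; last by exists c.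
have [c] := aut_functigraph_inl a (is_aut_inv aut).
by rewrite -E permK.
Qed.

Lemma aut_constant_functigraph_split s :
  is_aut F s -> exists s1 s2, s = sum_perm s1 s2.
Proof.
move=> aut; apply: sum_perm_split => x.
  exact: aut_functigraph_inl.
exact: aut_functigraph_inr.
Qed.

End ConstantFunctigraph.

Lemma phi_ge2 i : 2 <= phi i.
Proof. by rewrite /phi; case: ex_minnP => k /andP []. Qed.

Lemma le_bin2_phi i : i <= 'C(phi i, 2).
Proof. by rewrite /phi; case: ex_minnP => k /andP []. Qed.

Lemma bin2_lt_of_lt_phi i t : 0 < i -> t < phi i -> 'C(t, 2) < i.
Proof.
rewrite /phi; case: ex_minnP => k _ min_k i_gt0 lt_tk.
have [t_ge2 | t_lt2] := leqP 2 t; last by rewrite bin_small.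
by rewrite ltnNge; apply: contraTN lt_tk => le_it; rewrite -leqNgt min_k ?t_ge2.
Qed.

Lemma functigraph_Kn_minus_distinguishable n (M : {set {set 'I_n}}) g t :
  2 < n -> is_matching M -> (forall a b, g a = g b) ->
  0 < t -> #|~: cover M| <= t -> #|M| <= 'C(t, 2) ->
  t_distinguishable (functigraph (Kn_minus M) g) t.
Proof.
move=> n_gt2 matchingM gc t_gt0 unmatched_le edges_le.
have n_gt0 : 0 < n by apply: leq_trans n_gt2.
apply/t_distinguishableP; exists (copy_label (matching_label M (Ordinal t_gt0))).
apply: functigraph_copy_label_distinguishing; last exact: matching_label_distinguishing.
by move=> s; apply: (aut_constant_functigraph_split (v := g (Ordinal n_gt0))).
Qed.

Lemma functigraph_Kn_minus_not_distinguishable n (M : {set {set 'I_n}}) g t :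
  is_matching M -> (forall a b, g a = g b) ->
  t < #|~: cover M| \/ 'C(t, 2) < #|M| ->
  ~~ t_distinguishable (functigraph (Kn_minus M) g) t.
Proof.
move=> matchingM gc lt_t; apply/t_distinguishableP => -[f].
apply/symmetric_labeling_not_distinguishing/functigraph_symmetric_labeling => //.
by case: lt_t; [apply: unmatched_collision_symmetry | apply: matched_collision_symmetry].
Qed.

Theorem theorem3p4 (n i : nat) (M : {set {set 'I_n}}) (g : 'I_n -> 'I_n) :
  5 <= n -> 1 <= i -> i <= n %/ 2 ->
  is_matching M -> #|M| = i ->
  (forall a b, g a = g b) ->
  Dist (functigraph (Kn_minus M) g) = maxn (n - 2 * i) (phi i).
Proof.
move=> n_ge5 i_gt0 _ matchingM card_M gc; have n_gt2 : 2 < n by apply: leq_trans n_ge5.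
apply: Dist_eq.
  apply: functigraph_Kn_minus_distinguishable => //.
  - by rewrite leq_max (leq_trans _ (phi_ge2 i)) ?orbT.
  - by rewrite card_unmatched // card_M leq_maxl.
  - by rewrite card_M (leq_trans (le_bin2_phi i)) // leq_bin2l // leq_maxr.
move=> u; rewrite leq_max => /orP [lt_u | /(bin2_lt_of_lt_phi i_gt0) lt_u].
  apply: functigraph_Kn_minus_not_distinguishable => //.
  by left; rewrite card_unmatched // card_M.
by apply: functigraph_Kn_minus_not_distinguishable => //; right; rewrite card_M.
Qed.
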